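(* Let $(\mathcal P,\cdot,[-,\dots,-])$ be a finite-dimensional solvable Poisson $n$-Lie algebra over an algebraically closed field of characteristic zero. Then $\operatorname{Nil}(\mathcal P)$ coincides with the nilradical of the $n$-Lie algebra $\mathcal P_L=(\mathcal P,[-,\dots,-])$.
   Context: A Poisson $n$-Lie algebra is a commutative associative algebra $(\mathcal P,\cdot)$ with an $n$-linear skew-symmetric bracket satisfying the fundamental identity $[x_1,\dots,x_{n-1},[y_1,\dots,y_n]]=\sum_{i=1}^n[y_1,\dots,[x_1,\dots,x_{n-1},y_i],\dots,y_n]$ and the Leibniz rule $[y\cdot z,x_2,\dots,x_n]=y\cdot[z,x_2,\dots,x_n]+z\cdot[y,x_2,\dots,x_n]$. Products/brackets of subspaces are linear spans. An ideal $\mathcal I$ of $\mathcal P$ satisfies $\mathcal P\cdot\mathcal I\subseteq\mathcal I$, $[\mathcal I,\mathcal P,\dots,\mathcal P]\subseteq\mathcal I$; it is nilpotent if $\mathcal I^s=0$ for some $s$, where $\mathcal I^1=\mathcal I$, $\mathcal I^{k+1}=[\mathcal I^k,\mathcal I,\mathcal P,\dots,\mathcal P]+\mathcal I^k\cdot\mathcal I$. $\operatorname{Nil}(\mathcal P)$ is the maximal nilpotent ideal of $\mathcal P$. The nilradical of $\mathcal P_L$ is its maximal nilpotent ideal, where an ideal $N$ of $\mathcal P_L$ is nilpotent if $N^s=0$ with $N^1=N$, $N^{k+1}=[N^k,N,\mathcal P,\dots,\mathcal P]$. $\mathcal P$ is solvable if $\mathcal P^{(s)}=0$ for some $s$, with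 $\mathcal P^{(1)}=\mathcal P$, $\mathcal P^{(k+1)}=[\mathcal P^{(k)},\mathcal P^{(k)},\mathcal P,\dots,\mathcal P]+\mathcal P^{(k)}\cdot\mathcal P^{(k)}$. *)

From HB Require Import structures.
From mathcomp Require Import all_boot all_order all_algebra.
Set Implicit Arguments. Unset Strict Implicit. Unset Printing Implicit Defensive.
Import GRing.Theory.
Local Open Scope ring_scope.

(* Subsets of V are predicates V -> Prop; "products/brackets of subspaces are
   linear spans": spanP S is the set of vectors lying in the span of some finite
   family of elements of S. *)
Section PoissonNLie.
Variables (F : fieldType) (V : vectType F) (n : nat).
Variables (mul : V -> V -> V) (br : {ffun 'I_n -> V} -> V).

Definition spanP (S : V -> Prop) : V -> Prop :=
  fun v => exists s : seq V, (forall x, x \in s -> S x) /\ v \in <<s>>%VS.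

Definition fullP : V -> Prop := fun _ => True.

Definition sumP (A B : V -> Prop) : V -> Prop :=
  fun v => exists a b, A a /\ B b /\ v = a + b.

Definition mulP (A B : V -> Prop) : V -> Prop :=
  spanP (fun v => exists a b, A a /\ B b /\ v = mul a b).

Definition brP (A : 'I_n -> (V -> Prop)) : V -> Prop :=
  spanP (fun v => exists x : {ffun 'I_n -> V}, (forall i, A i (x i)) /\ v = br x).

Definition args1 (X : V -> Prop) : 'I_n -> (V -> Prop) :=
  fun i => if val i == 0%N then X else fullP.
Definition args2 (X Y : V -> Prop) : 'I_n -> (V -> Prop) :=
  fun i => if val i == 0%N then X else if val i == 1%N then Y else fullP.

Definition fupd (x : {ffun 'I_n -> V}) (i : 'I_n) (u : V) : {ffun 'I_n -> V} :=
  [ffun j => if j == i then u else x j].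
Definition fswap (x : {ffun 'I_n -> V}) (i j : 'I_n) : {ffun 'I_n -> V} :=
  [ffun k => if k == i then x j else if k == j then x i else x k].
Definition flast (x : {ffun 'I_n -> V}) (z : V) : {ffun 'I_n -> V} :=
  [ffun k : 'I_n => if (val k < n.-1)%N then x k else z].

Definition comm_assoc_algebra : Prop :=
  [/\ forall (a : F) (u v w : V), mul (a *: u + v) w = a *: mul u w + mul v w,
      forall u v, mul u v = mul v u
    & forall u v w, mul u (mul v w) = mul (mul u v) w].

Definition multilinear : Prop :=
  forall (x : {ffun 'I_n -> V}) (i : 'I_n) (a : F) (u v : V),
    br (fupd x i (a *: u + v)) = a *: br (fupd x i u) + br (fupd x i v).

Definition skew_symmetric : Prop :=
  forall (x : {ffun 'I_n -> V}) (i j : 'I_n), i != j -> br (fswap x i j) = - br x.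

Definition fundamental_identity : Prop :=
  forall x y : {ffun 'I_n -> V},
    br (flast x (br y)) = \sum_(i < n) br (fupd y i (br (flast x (y i)))).

Definition leibniz_rule : Prop :=
  forall (x : {ffun 'I_n -> V}) (i : 'I_n) (y z : V), val i = 0%N ->
    br (fupd x i (mul y z)) = mul y (br (fupd x i z)) + mul z (br (fupd x i y)).

Definition poisson_nLie : Prop :=
  (2 <= n)%N /\ comm_assoc_algebra /\ multilinear /\ skew_symmetric /\
  fundamental_identity /\ leibniz_rule.

Definition poisson_ideal (I : {vspace V}) : Prop :=
  (forall v, mulP fullP (fun u => u \in I) v -> v \in I) /\
  (forall v, brP (args1 (fun u => u \in I)) v -> v \in I).

Fixpoint ppow (I : V -> Prop) (k : nat) : V -> Prop :=
  match k with
  | 0%N | 1%N => I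
  | k'.+1 => sumP (brP (args2 (ppow I k') I)) (mulP (ppow I k') I)
  end.

Definition poisson_nilpotent_ideal (I : {vspace V}) : Prop :=
  poisson_ideal I /\
  exists s, forall v, ppow (fun u => u \in I) s v -> v = 0.

Definition is_Nil (N : {vspace V}) : Prop :=
  poisson_nilpotent_ideal N /\
  forall I, poisson_nilpotent_ideal I -> (I <= N)%VS.

Definition lie_ideal (I : {vspace V}) : Prop :=
  forall v, brP (args1 (fun u => u \in I)) v -> v \in I.

Fixpoint lpow (I : V -> Prop) (k : nat) : V -> Prop :=
  match k with
  | 0%N | 1%N => I
  | k'.+1 => brP (args2 (lpow I k') I)
  end.

Definition lie_nilpotent_ideal (I : {vspace V}) : Prop :=
  lie_ideal I /\ exists s, forall v, lpow (fun u => u \in I) s v -> v = 0.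

Definition is_nilradical_L (N : {vspace V}) : Prop :=
  lie_nilpotent_ideal N /\
  forall I, lie_nilpotent_ideal I -> (I <= N)%VS.

Fixpoint dser (k : nat) : V -> Prop :=
  match k with
  | 0%N | 1%N => fullP
  | k'.+1 => sumP (brP (args2 (dser k') (dser k'))) (mulP (dser k') (dser k'))
  end.

Definition poisson_solvable : Prop :=
  exists s, forall v, dser s v -> v = 0.

End PoissonNLie.

(* Solvability already makes the associative algebra (P, .) nilpotent: a product
   of 2^k elements lies in P^(k+1), so all products of 2^(s-1) elements vanish.
   Let N be the nilradical of P_L; it exists because the sum of two nilpotent
   ideals I, K of P_L is nilpotent, (I + K)^m being spanned by elements of
   I^p /\ K^q with p + q = m.  Give a product of elements of P and of powers N^b
   the weight sum of the b's, and let W_w be the span of the products of weight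
   at least w.  The Leibniz rule and the fundamental identity give
   [W_w, P, ..., P] <= W_w and [W_w, W_1, P, ..., P] <= W_(w+1), and W_w = 0 for
   large w, since a nonzero product has fewer than 2^(s-1) factors, each of
   weight below the nilpotency index of N.  Hence W_1, which contains N and P.N,
   is a nilpotent ideal of P_L and lies in N: so N is an ideal of P, and it is
   nilpotent because N^k <= W_k.  Conversely the Lie powers of an ideal of P lie
   in its Poisson powers, so nilpotent ideals of P are nilpotent ideals of P_L. *)

From HB Require Import structures.
From mathcomp Require Import all_boot all_order all_algebra.
From Stdlib Require Import Classical Lia.
From mathcomp Require Import zify.
Set Implicit Arguments. Unset Strict Implicit. Unset Printing Implicit Defensive.
Import GRing.Theory.
Local Open Scope ring_scope.

Section LinearlyClosed.
Variables (F : fieldType) (V : vectType F).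
Implicit Types (C S T : V -> Prop) (U : {vspace V}).

Definition lin_closed C := C 0 /\ forall a u v, C u -> C v -> C (a *: u + v).

Lemma lin_closed0 C : lin_closed C -> C 0.
Proof. by case. Qed.

Lemma lin_closedD C u v : lin_closed C -> C u -> C v -> C (u + v).
Proof. by case=> _ HC Hu Hv; rewrite -[u]scale1r; apply: HC. Qed.

Lemma lin_closedN C u : lin_closed C -> C u -> C (- u).
Proof. by case=> H0 HC Hu; rewrite -scaleN1r -[_ *: _]addr0; apply: HC. Qed.

Lemma lin_closed_sum C (I : Type) (r : seq I) (P : pred I) (f : I -> V) :
  lin_closed C -> (forall i, P i -> C (f i)) -> C (\sum_(i <- r | P i) f i).
Proof.
move=> HC Hf; apply: (big_ind C) => [||//]; first exact: lin_closed0.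
by move=> u v; apply: lin_closedD.
Qed.

Lemma lin_closed_mem U : lin_closed (fun u => u \in U).
Proof. by split=> [|a u v Hu Hv]; rewrite ?mem0v // memvD // memvZ. Qed.

Lemma lin_closed_eq0 : lin_closed (fun v : V => v = 0).
Proof. by split=> // a u v -> ->; rewrite scaler0 addr0. Qed.

Lemma lin_closed_spanP S : lin_closed (spanP S).
Proof.
split; first by exists [::]; rewrite span_nil memv0.
move=> a u v [s1 [H1 Hu]] [s2 [H2 Hv]]; exists (s1 ++ s2); split.
  by move=> x; rewrite mem_cat => /orP[/H1|/H2].
by rewrite span_cat memv_add // memvZ.
Qed.

Lemma lin_closed_sumP C T : lin_closed C -> lin_closed T -> lin_closed (sumP C T).
Proof.
move=> [C0 HC] [T0 HT]; split; first by exists 0, 0; rewrite addr0.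
move=> a _ _ [u1 [v1 [Hu1 [Hv1 ->]]]] [u2 [v2 [Hu2 [Hv2 ->]]]].
exists (a *: u1 + u2), (a *: v1 + v2); split; first exact: HC.
by split; [apply: HT | rewrite scalerDr addrACA].
Qed.

Lemma spanP_mem S x : S x -> spanP S x.
Proof.
move=> Hx; exists [:: x]; split; first by move=> y; rewrite inE => /eqP ->.
exact/memv_span/mem_head.
Qed.

Lemma spanP_ind C S : lin_closed C -> (forall x, S x -> C x) ->
  forall v, spanP S v -> C v.
Proof.
move=> [C0 HC] HS v [s [Hs Hv]]; elim: s v Hs Hv => [|x s IH] v Hs Hv.
  by move: Hv; rewrite span_nil memv0 => /eqP ->.
move: Hv; rewrite span_cons => /memv_addP [y /vlineP [k ->] [z Hz ->]].
apply: HC; first exact/HS/Hs/mem_head.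
by apply: IH => // t Ht; apply: Hs; rewrite inE Ht orbT.
Qed.

Lemma spanP_mono S T : (forall x, S x -> T x) -> forall v, spanP S v -> spanP T v.
Proof. by move=> ST; apply: spanP_ind (lin_closed_spanP T) _ => x /ST/spanP_mem. Qed.

Lemma ex_maxdim (Pr : {vspace V} -> Prop) U0 : Pr U0 ->
  exists2 N, Pr N & forall U, Pr U -> (\dim U <= \dim N)%N.
Proof.
move=> H0; suff: forall k U, Pr U -> (\dim (fullv : {vspace V}) - \dim U <= k)%N ->
  exists2 N, Pr N & forall U, Pr U -> (\dim U <= \dim N)%N by move/(_ _ U0 H0); apply.
elim=> [|k IH] U HU Hk.
  exists U => // U' _; apply: leq_trans (dimvS (subvf U')) _.
  by rewrite -subn_eq0 -leqn0.
have [[U' [HU' Hlt]]|Hmax] := classic (exists U', Pr U' /\ (\dim U < \dim U')%N).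
  apply: (IH U') => //; have := dimvS (subvf U'); lia.
exists U => // U' HU'; rewrite leqNgt; apply/negP => Hlt.
by apply: Hmax; exists U'.
Qed.

Lemma spanP_vspace S : exists U : {vspace V}, forall v, v \in U <-> spanP S v.
Proof.
pose Pr U := exists2 s, (forall x, x \in s -> S x) & U = <<s>>%VS.
have Pr0 : Pr 0%VS by exists [::]; rewrite ?span_nil.
have [_ [s Hs ->] Hmax] := ex_maxdim Pr0.
exists <<s>>%VS => v; split=> [Hv|[s' [Hs' Hv]]]; first by exists s.
have /eqP -> : <<s>>%VS == <<s ++ s'>>%VS.
  rewrite eqEdim Hmax ?andbT; first by rewrite span_cat addvSl.
  by exists (s ++ s') => // x; rewrite mem_cat => /orP[/Hs|/Hs'].
by rewrite span_cat; apply: (subvP (addvSr _ _)).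
Qed.

End LinearlyClosed.

Section PoissonNLieTheory.
Variables (F : fieldType) (V : vectType F) (n' : nat).
Local Notation n := n'.+2.
Variables (mul : V -> V -> V) (br : {ffun 'I_n -> V} -> V).
Hypothesis mul_comm_assoc : comm_assoc_algebra mul.
Hypothesis br_linear : multilinear br.
Hypothesis br_skew : skew_symmetric br.
Hypothesis br_fundamental : fundamental_identity br.
Hypothesis br_leibniz : leibniz_rule mul br.
Implicit Types (x y : {ffun 'I_n -> V}) (C S X Y : V -> Prop).

Local Notation i0 := (ord0 : 'I_n).
Local Notation i1 := (lift ord0 ord0 : 'I_n).

Lemma fupdE x i u j : fupd x i u j = if j == i then u else x j.
Proof. by rewrite ffunE. Qed.

Lemma fupd_same x i u : fupd x i u i = u.
Proof. by rewrite fupdE eqxx. Qed.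

Lemma fupd_other x i u j : j != i -> fupd x i u j = x j.
Proof. by rewrite fupdE => /negPf ->. Qed.

Lemma fupd_id x i : fupd x i (x i) = x.
Proof. by apply/ffunP=> j; rewrite fupdE; case: eqP => // ->. Qed.

Lemma fswapE x i j k :
  fswap x i j k = if k == i then x j else if k == j then x i else x k.
Proof. by rewrite ffunE. Qed.

Lemma brD x i u v : br (fupd x i (u + v)) = br (fupd x i u) + br (fupd x i v).
Proof. by have := br_linear x i 1 u v; rewrite !scale1r. Qed.

Lemma br0 x i : br (fupd x i 0) = 0.
Proof. by apply: (addrI (br (fupd x i 0))); rewrite addr0 -brD addr0. Qed.

Lemma br_ind C S x i : lin_closed C -> spanP S (x i) ->
  (forall u, S u -> C (br (fupd x i u))) -> C (br x).
Proof.
move=> [C0 HC] Sx HS; rewrite -(fupd_id x i).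
have lin_slot : lin_closed (fun u => C (br (fupd x i u))).
  by split=> [|a u v Hu Hv]; rewrite ?br0 ?br_linear //; apply: HC.
exact: spanP_ind lin_slot HS _ Sx.
Qed.

Lemma br_swap_ind C x i j : lin_closed C -> C (br (fswap x i j)) -> C (br x).
Proof.
move=> HC; have [->|ij] := eqVneq i j.
  by congr (C (br _)); apply/ffunP=> k; rewrite fswapE; case: eqP => // ->.
by rewrite br_skew // => /(lin_closedN HC); rewrite opprK.
Qed.

Lemma args1_at X x : X (x i0) -> forall i, args1 X i (x i).
Proof.
move=> Xx i; rewrite /args1; case: eqP => // /eqP i_0.
by have -> : i = i0 by apply: val_inj; apply/eqP.
Qed.

Lemma args2_at X Y x : X (x i0) -> Y (x i1) -> forall i, args2 X Y i (x i).
Proof.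
move=> Xx Yx i; rewrite /args2; case: eqP => [i_0|_].
  by have -> : i = i0 by apply: val_inj.
case: eqP => // i_1; by have -> : i = i1 by apply: val_inj.
Qed.

Lemma brP_args2 X Y x : X (x i0) -> Y (x i1) -> brP br (args2 X Y) (br x).
Proof. by move=> Xx Yx; apply: spanP_mem; exists x; split=> //; apply: args2_at. Qed.

Lemma brP_args2_ind C X Y : lin_closed C ->
  (forall x, X (x i0) -> Y (x i1) -> C (br x)) -> forall v, brP br (args2 X Y) v -> C v.
Proof.
move=> HC H; apply: spanP_ind => // _ [x [Hx ->]].
by apply: H; [apply: (Hx i0) | apply: (Hx i1)].
Qed.

Definition lideal X := lin_closed X /\ forall x, X (x i0) -> X (br x).

Lemma lidealP (I : {vspace V}) : lie_ideal br I <-> lideal (fun u => u \in I).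
Proof.
split=> [idI | [_ idI] v]; last first.
  by apply: spanP_ind (lin_closed_mem I) _ v => _ [x [Hx ->]]; apply/idI/(Hx i0).
split=> [|x Ix]; first exact: lin_closed_mem.
by apply: idI; apply: spanP_mem; exists x; split=> //; apply: args1_at.
Qed.

Lemma lideal_br X x i : lideal X -> X (x i) -> X (br x).
Proof.
move=> [linX idX] Xx; apply: (br_swap_ind (i := i0) (j := i) linX).
by apply: idX; rewrite fswapE eqxx.
Qed.

Lemma lin_closed_lpow X k : lin_closed X -> lin_closed (lpow br X k).
Proof. by case: k => [|[|k]] //= _; apply: lin_closed_spanP. Qed.

Lemma lpowS_br X k x : lpow br X k.+1 (x i0) -> X (x i1) -> lpow br X k.+2 (br x).
Proof. exact: brP_args2. Qed.

Lemma lpow_ind C X k : lin_closed C ->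
  (forall x, lpow br X k.+1 (x i0) -> X (x i1) -> C (br x)) ->
  forall v, lpow br X k.+2 v -> C v.
Proof. exact: brP_args2_ind. Qed.

Lemma flast_max x z : flast x z ord_max = z.
Proof. by rewrite ffunE ltnn. Qed.

Lemma fswap_fupd0 x z :
  fswap (fupd x i0 z) i0 ord_max = flast (fswap x i0 ord_max) z.
Proof.
apply/ffunP=> k; rewrite !ffunE; have [->|k0] //= := eqVneq k i0.
have [->|km] /= := eqVneq k ord_max; first by rewrite ltnn.
by rewrite ltn_neqAle -ltnS ltn_ord andbT ifT.
Qed.

Lemma lideal_lpow X k : lideal X -> lideal (lpow br X k.+1).
Proof.
move=> idX; elim: k => [|k IH] //.
split; first by apply: lin_closed_lpow; case: idX.
move=> x Hx; apply: (br_ind (lin_closed_spanP _) Hx) => _ [y [Hy ->]].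
apply: (br_swap_ind (i := i0) (j := ord_max)); first exact: lin_closed_spanP.
rewrite fswap_fupd0 br_fundamental; apply: lin_closed_sum => [|i _].
  exact: lin_closed_spanP.
apply: lpowS_br; rewrite fupdE; case: eqP => [<-|_].
- by apply: (lideal_br (i := ord_max) IH); rewrite flast_max; apply: (Hy i0).
- exact: (Hy i0).
- by apply: (lideal_br (i := ord_max) idX); rewrite flast_max; apply: (Hy i1).
- exact: (Hy i1).
Qed.

Lemma lpow_antimono X k m v :
  lideal X -> (k <= m)%N -> lpow br X m.+1 v -> lpow br X k.+1 v.
Proof.
move=> idX; elim: m v => [|m IH] v; first by rewrite leqn0 => /eqP ->.
rewrite leq_eqVlt => /orP[/eqP -> //|]; rewrite ltnS => km Hv; apply: IH => //.
have [lin_m id_m] := lideal_lpow m idX.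
by apply: lpow_ind Hv => // x Hx _; apply: id_m.
Qed.

Lemma lpow_sub X k v : lideal X -> lpow br X k v -> X v.
Proof. by case: k => [|k] // idX; apply: (lpow_antimono (k := 0)). Qed.

Lemma lpow_eq0 X s m v : lideal X -> (forall v, lpow br X s v -> v = 0) ->
  (s <= m)%N -> lpow br X m.+1 v -> v = 0.
Proof.
move=> idX nilX sm Hv; apply: nilX; case: s sm => [|s] sm.
  exact: (lpow_antimono (k := 0)) Hv.
exact: lpow_antimono (ltnW sm) Hv.
Qed.

Definition lpowT X p : V -> Prop := if p is 0 then @fullP _ V else lpow br X p.

Lemma lpowT_br X p x : lideal X -> lpowT X p (x i0) -> X (x i1) -> lpowT X p.+1 (br x).
Proof.
case: p => [|p] idX /= Xx0 Xx1; last exact: lpowS_br.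
exact: (lideal_br (i := i1) idX).
Qed.

Lemma lpowT_br_any X p x : lideal X -> lpowT X p (x i0) -> lpowT X p (br x).
Proof. by case: p => [|p] idX //= Xx; case: (lideal_lpow p idX) => _; apply. Qed.

Lemma lpow_addv_split (I K : {vspace V}) m v :
  lideal (fun u => u \in I) -> lideal (fun u => u \in K) ->
  lpow br (fun u => u \in (I + K)%VS) m.+1 v ->
  spanP (fun u => exists p q, [/\ (p + q)%N = m.+1,
    lpowT (fun u => u \in I) p u & lpowT (fun u => u \in K) q u]) v.
Proof.
move=> idI idK; elim: m v => [|m IH] v.
  move=> /memv_addP [a Ia [b Kb ->]]; apply: lin_closedD; first exact: lin_closed_spanP.
    by apply: spanP_mem; exists 1%N, 0%N.
  by apply: spanP_mem; exists 0%N, 1%N.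
apply: lpow_ind; first exact: lin_closed_spanP.
move=> x /IH Hx /memv_addP [a Ia [b Kb xab]].
apply: (br_ind (lin_closed_spanP _) Hx) => u [p [q [pq Ip Kq]]].
have u0 c : fupd (fupd x i0 u) i1 c i0 = u by rewrite fupd_other // fupd_same.
rewrite -(fupd_id (fupd x i0 u) i1) fupd_other // xab brD.
apply: lin_closedD; first exact: lin_closed_spanP.
  apply: spanP_mem; exists p.+1, q; split; first by rewrite addSn pq.
    by apply: lpowT_br; rewrite ?u0 ?fupd_same.
  by apply: lpowT_br_any; rewrite ?u0.
apply: spanP_mem; exists p, q.+1; split; first by rewrite addnS pq.
  by apply: lpowT_br_any; rewrite ?u0.
by apply: lpowT_br; rewrite ?u0 ?fupd_same.
Qed.

Lemma lie_nilpotent_idealD (I K : {vspace V}) :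
  lie_nilpotent_ideal br I -> lie_nilpotent_ideal br K ->
  lie_nilpotent_ideal br (I + K)%VS.
Proof.
move=> [/lidealP idI [sI nilI]] [/lidealP idK [sK nilK]]; split.
  apply/lidealP; split=> [|x /memv_addP [a Ia [b Kb xab]]].
    exact: lin_closed_mem.
  rewrite -(fupd_id x i0) xab brD memv_add //.
    by apply: (lideal_br (i := i0) idI); rewrite fupd_same.
  by apply: (lideal_br (i := i0) idK); rewrite fupd_same.
exists (sI + sK).+1 => v /(lpow_addv_split idI idK).
apply: (spanP_ind (@lin_closed_eq0 _ V)) => u [p [q [pq Ip Kq]]].
have [sIp|pI] := leqP sI.+1 p.
  by case: p Ip pq sIp => [|p] // Ip _ sIp; apply: (lpow_eq0 idI nilI sIp).
have sKq : (sK.+1 <= q)%N by lia.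
by case: q Kq pq sKq => [|q] // Kq _ sKq; apply: (lpow_eq0 idK nilK sKq).
Qed.

Lemma lie_nilpotent_ideal0 : lie_nilpotent_ideal br 0%VS.
Proof.
split; last by exists 1%N => v /=; rewrite memv0 => /eqP.
apply/lidealP; split=> [|x]; first exact: lin_closed_mem.
by rewrite memv0 => /eqP x0; rewrite -(fupd_id x i0) x0 br0 mem0v.
Qed.

Lemma nilradical_L_exists : exists N, is_nilradical_L br N.
Proof.
have [N nilN Nmax] := ex_maxdim lie_nilpotent_ideal0.
exists N; split=> // I nilI.
have /eqP -> : N == (N + I)%VS.
  by rewrite eqEdim addvSl Nmax //; apply: lie_nilpotent_idealD.
exact: addvSr.
Qed.

Lemma pmulDl a u v w : mul (a *: u + v) w = a *: mul u w + mul v w.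
Proof. by case: mul_comm_assoc. Qed.

Lemma pmulC u v : mul u v = mul v u.
Proof. by case: mul_comm_assoc. Qed.

Lemma pmulA u v w : mul u (mul v w) = mul (mul u v) w.
Proof. by case: mul_comm_assoc. Qed.

Lemma pmul0l w : mul 0 w = 0.
Proof.
have := pmulDl 1 0 0 w; rewrite !scale1r addr0 => e.
by apply: (addrI (mul 0 w)); rewrite addr0 -e.
Qed.

Lemma pmul0r w : mul w 0 = 0.
Proof. by rewrite pmulC pmul0l. Qed.

Lemma mul_spanl C S (u v : V) : lin_closed C -> spanP S u ->
  (forall a, S a -> C (mul a v)) -> C (mul u v).
Proof.
move=> [C0 HC] Su HS.
have lin_left : lin_closed (fun u => C (mul u v)).
  by split=> [|a u1 u2 Hu1 Hu2]; rewrite ?pmul0l ?pmulDl //; apply: HC.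
exact: spanP_ind lin_left HS _ Su.
Qed.

Lemma mul_spanr C S (u v : V) : lin_closed C -> spanP S v ->
  (forall b, S b -> C (mul u b)) -> C (mul u v).
Proof.
move=> HC Sv HS; rewrite pmulC; apply: mul_spanl HC Sv _ => b Sb.
by rewrite pmulC; apply: HS.
Qed.

Lemma mulP_mem X Y a b : X a -> Y b -> mulP mul X Y (mul a b).
Proof. by move=> Xa Yb; apply: spanP_mem; exists a, b. Qed.

Fixpoint apow k : V -> Prop :=
  match k with
  | 0%N | 1%N => @fullP _ V
  | k'.+1 => mulP mul (@fullP _ V) (apow k')
  end.

Lemma lin_closed_apow k : lin_closed (apow k).
Proof. by case: k => [|[|k]]; try exact: lin_closed_spanP. Qed.

Lemma apow_mul a b (u v : V) :
  apow a.+1 u -> apow b.+1 v -> apow (a.+1 + b.+1) (mul u v).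
Proof.
elim: a u => [|a IH] u Hu Hv; first by rewrite add1n; apply: mulP_mem.
rewrite addSn; apply: mul_spanl (lin_closed_apow _) Hu _ => _ [p [z [_ [Hz ->]]]].
by rewrite -pmulA; apply: mulP_mem => //; apply: IH.
Qed.

Lemma apow_split a b v :
  apow (a.+1 + b.+1) v -> mulP mul (apow a.+1) (apow b.+1) v.
Proof.
elim: a v => [|a IH] v; first by rewrite add1n => Hv; exact: Hv.
rewrite addSn => Hv; apply: spanP_ind (lin_closed_spanP _) _ v Hv.
move=> _ [p [z [_ [Hz ->]]]].
apply: mul_spanr (lin_closed_spanP _) (IH _ Hz) _ => _ [u [w [Hu [Hw ->]]]].
by rewrite pmulA; apply: mulP_mem => //; apply: mulP_mem.
Qed.

Lemma apowS k v : apow k.+1 v -> apow k v.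
Proof.
elim: k v => [|[|k] IH] v //; apply: spanP_mono => _ [p [z [_ [Hz ->]]]].
by exists p, z; split=> //; split=> //; apply: IH.
Qed.

Lemma apow_antimono k m v : (k <= m)%N -> apow m v -> apow k v.
Proof.
elim: m v => [|m IH] v; first by rewrite leqn0 => /eqP ->.
by rewrite leq_eqVlt ltnS => /orP[/eqP -> // | km /apowS]; apply: IH.
Qed.

Lemma apow_dser k v : apow (2 ^ k) v -> dser mul br k.+1 v.
Proof.
elim: k v => [|k IH] v //.
have [m e] : exists m, (2 ^ k = m.+1)%N by exists (2 ^ k).-1; rewrite prednK ?expn_gt0.
rewrite expnS mul2n -addnn e => /apow_split Hv; exists 0, v.
split; first exact: lin_closed0 (lin_closed_spanP _).
split; last by rewrite add0r.
apply: spanP_mono Hv => _ [a [b [Ha [Hb ->]]]]; rewrite -e in Ha Hb.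
by exists a, b; split; [apply: IH | split; [apply: IH |]].
Qed.

Lemma apow_eq0 s l v : (forall v, dser mul br s v -> v = 0) ->
  (2 ^ s.-1 <= l)%N -> apow l v -> v = 0.
Proof.
by case: s => [|s] dser0 sl /(apow_antimono sl)/apow_dser; apply: dser0.
Qed.

Section Weights.
Variable X : V -> Prop.
Hypothesis idX : lideal X.

(* [Mono w l v]: v is a product of l factors, each either an arbitrary element
   (of weight 0) or an element of some X^b with b >= 1 (of weight b), the
   weights adding up to w. *)
Inductive Mono : nat -> nat -> V -> Prop :=
  | Mono_any u : Mono 0 1 u
  | Mono_lpow b u : (0 < b)%N -> lpow br X b u -> Mono b 1 u
  | Mono_mul w1 l1 u1 w2 l2 u2 : Mono w1 l1 u1 -> Mono w2 l2 u2 ->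
      Mono (w1 + w2) (l1 + l2) (mul u1 u2).

Definition Wt w : V -> Prop :=
  spanP (fun v => exists w' l, (w <= w')%N /\ Mono w' l v).

Lemma lin_closed_Wt w : lin_closed (Wt w).
Proof. exact: lin_closed_spanP. Qed.

Lemma Mono_Wt w l v : Mono w l v -> Wt w v.
Proof. by move=> Hv; apply: spanP_mem; exists w, l. Qed.

Lemma Wt_antimono w1 w2 v : (w1 <= w2)%N -> Wt w2 v -> Wt w1 v.
Proof.
move=> w12; apply: spanP_mono => u [w [l [w2w Hu]]].
by exists w, l; split=> //; apply: leq_trans w2w.
Qed.

Lemma Wt_mul w1 w2 u v : Wt w1 u -> Wt w2 v -> Wt (w1 + w2) (mul u v).
Proof.
move=> Hu Hv; apply: mul_spanl (lin_closed_Wt _) Hu _ => a [wa [la [w1a Ha]]].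
apply: mul_spanr (lin_closed_Wt _) Hv _ => b [wb [lb [w2b Hb]]].
apply: spanP_mem; exists (wa + wb)%N, (la + lb)%N.
by split; [apply: leq_add | apply: Mono_mul].
Qed.

Lemma Mono_apow w l v : Mono w l v -> (0 < l)%N /\ apow l v.
Proof.
elim=> [u|b u _ _|w1 l1 u1 w2 l2 u2 _ [l1_gt0 Hu1] _ [l2_gt0 Hu2]]; try by split.
split; first by rewrite addn_gt0 l1_gt0.
case: l1 l1_gt0 Hu1 => // l1 _ Hu1; case: l2 l2_gt0 Hu2 => // l2 _ Hu2.
exact: apow_mul.
Qed.

Lemma Mono_weight_bound sN w l v : (forall v, lpow br X sN v -> v = 0) ->
  Mono w l v -> v = 0 \/ (w <= sN * l)%N.
Proof.
move=> nilX; elim=> [u|b u b_gt0 Hu|w1 l1 u1 w2 l2 u2 _ IH1 _ IH2].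
- by right.
- case: b b_gt0 Hu => [|b] // _ Hu; have [sNb|bsN] := leqP sN b.
    by left; apply: lpow_eq0 idX nilX sNb Hu.
  by right; rewrite muln1.
- have [->|w1_le] := IH1; first by left; rewrite pmul0l.
  have [->|w2_le] := IH2; first by left; rewrite pmul0r.
  by right; rewrite mulnDr leq_add.
Qed.

Lemma Mono_br w l u x : Mono w l u -> x i0 = u -> Wt w (br x).
Proof.
move=> Hu; elim: Hu x => [p|b v b_gt0 Hv|w1 l1 a w2 l2 c Ha IHa Hc IHc] x x0.
- exact: Mono_Wt (Mono_any _).
- case: b b_gt0 Hv => [|b] // _ Hv; apply: (Mono_Wt (l := 1)); apply: Mono_lpow => //.
  by case: (lideal_lpow b idX) => _; apply; rewrite x0.
- rewrite -(fupd_id x i0) x0 br_leibniz //.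
  apply: lin_closedD; first exact: lin_closed_Wt.
    by apply: Wt_mul (Mono_Wt Ha) _; apply: IHc; rewrite fupd_same.
  by rewrite addnC; apply: Wt_mul (Mono_Wt Hc) _; apply: IHa; rewrite fupd_same.
Qed.

Lemma lideal_Wt w : lideal (Wt w).
Proof.
split=> [|x Hx]; first exact: lin_closed_Wt.
apply: br_ind (lin_closed_Wt _) Hx _ => u [w' [l [ww' Hu]]].
by apply: Wt_antimono ww' _; apply: Mono_br Hu _; rewrite fupd_same.
Qed.

Lemma br_Mono_X w l u x : Mono w l u -> x i0 = u -> X (x i1) -> Wt w.+1 (br x).
Proof.
move=> Hu; elim: Hu x => [p|b v b_gt0 Hv|w1 l1 a w2 l2 c Ha IHa Hc IHc] x x0 x1.
- apply: (Mono_Wt (l := 1)); apply: Mono_lpow => //.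
  exact: (lideal_br (i := i1) idX).
- apply: (Mono_Wt (l := 1)); apply: Mono_lpow => //.
  by case: b b_gt0 Hv => [|b] // _ Hv; apply: lpowS_br; rewrite ?x0.
- rewrite -(fupd_id x i0) x0 br_leibniz //.
  apply: lin_closedD; first exact: lin_closed_Wt.
    rewrite -addnS; apply: Wt_mul (Mono_Wt Ha) _.
    by apply: IHc; rewrite ?fupd_same ?fupd_other.
  rewrite -addSn addnC; apply: Wt_mul (Mono_Wt Hc) _.
  by apply: IHa; rewrite ?fupd_same ?fupd_other.
Qed.

(* one of the two terms of the Leibniz expansion of [mul a c, v, ...] *)
Lemma Wt_leibniz_term wa la a wc lc c w l v y :
  Mono wa la a -> Mono wc lc c -> (0 < wa + wc)%N -> Mono w l v -> y i1 = v ->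
  ((0 < wc)%N -> forall x, x i0 = v -> x i1 = c -> Wt w.+1 (br x)) ->
  Wt w.+1 (mul a (br (fupd y i0 c))).
Proof.
move=> Ha Hc wac Hv y1 IHc; have [wc0|wc_gt0] := posnP wc.
  have : Wt w (br (fupd y i0 c)).
    apply: (lideal_br (i := i1) (lideal_Wt w)).
    by rewrite fupd_other // y1; apply: Mono_Wt Hv.
  move/(Wt_mul (Mono_Wt Ha)); apply: Wt_antimono.
  by move: wac; rewrite wc0; lia.
apply: Wt_antimono (leq_addl wa _) _; apply: Wt_mul (Mono_Wt Ha) _.
apply: (br_swap_ind (i := i0) (j := i1) (lin_closed_Wt _)); apply: IHc => //.
  by rewrite fswapE eqxx fupd_other.
by rewrite fswapE eqxx /= fupd_same.
Qed.

Lemma br_Mono w' l' u : Mono w' l' u -> (0 < w')%N ->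
  forall w l v x, Mono w l v -> x i0 = v -> x i1 = u -> Wt w.+1 (br x).
Proof.
elim=> [p|b u' b_gt0 Hu'|wa la a wc lc c Ha IHa Hc IHc] // w'_gt0 w l v x Hv x0 x1.
  by apply: br_Mono_X Hv x0 _; rewrite x1; apply: lpow_sub idX Hu'.
apply: (br_swap_ind (i := i0) (j := i1) (lin_closed_Wt _)).
set y := fswap x i0 i1.
have y0 : y i0 = mul a c by rewrite /y fswapE eqxx.
have y1 : y i1 = v by rewrite /y fswapE eqxx /=.
rewrite -(fupd_id y i0) y0 br_leibniz //.
apply: lin_closedD; first exact: lin_closed_Wt.
  apply: (Wt_leibniz_term Ha Hc w'_gt0 Hv y1) => wc_gt0 x'.
  exact: IHc wc_gt0 w l v x' Hv.
apply: (Wt_leibniz_term Hc Ha _ Hv y1); first by rewrite addnC.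
by move=> wa_gt0 x'; apply: IHa wa_gt0 w l v x' Hv.
Qed.

Lemma Wt_br k x : Wt k (x i0) -> Wt 1 (x i1) -> Wt k.+1 (br x).
Proof.
move=> Hx0 Hx1; apply: br_ind (lin_closed_Wt _) Hx0 _ => v [w [l [kw Hv]]].
have Hx1' : Wt 1 (fupd x i0 v i1) by rewrite fupd_other.
apply: br_ind (lin_closed_Wt _) Hx1' _ => u [w' [l' [w'_gt0 Hu]]].
apply: (Wt_antimono (w2 := w.+1)); first by rewrite ltnS.
apply: (br_Mono Hu w'_gt0 Hv); first by rewrite fupd_other // fupd_same.
by rewrite fupd_same.
Qed.

Lemma Wt_eq0 sN s w v : (forall v, lpow br X sN v -> v = 0) ->
  (forall v, dser mul br s v -> v = 0) ->
  (sN.+1 * 2 ^ s.-1 <= w)%N -> Wt w v -> v = 0.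
Proof.
move=> nilX dser0 w_big; apply: (spanP_ind (@lin_closed_eq0 _ V)).
move=> u [w' [l [ww' Hu]]]; have [_ Hl] := Mono_apow Hu.
have [//|w'_le] := Mono_weight_bound nilX Hu.
apply: apow_eq0 dser0 _ Hl; rewrite leqNgt; apply/negP => l_small; nia.
Qed.

End Weights.

Lemma ppowSE X k : ppow mul br X k.+2 =
  sumP (brP br (args2 (ppow mul br X k.+1) X)) (mulP mul (ppow mul br X k.+1) X).
Proof. by []. Qed.

Lemma lpow_ppow X k v : lpow br X k v -> ppow mul br X k v.
Proof.
elim: k v => [|[|k] IH] v //; apply: lpow_ind.
  by apply: lin_closed_sumP; apply: lin_closed_spanP.
move=> x Hx0 Hx1; exists (br x), 0; rewrite addr0.
split; first by apply: brP_args2 => //; apply: IH.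
by split=> //; apply: lin_closed0 (lin_closed_spanP _).
Qed.

Lemma lie_nilpotent_poisson (I : {vspace V}) :
  poisson_nilpotent_ideal mul br I -> lie_nilpotent_ideal br I.
Proof. by case=> [[_ idI] [s nilI]]; split=> //; exists s => v /lpow_ppow /nilI. Qed.

Section Nilradical.
Variable N : {vspace V}.
Hypothesis nilN : is_nilradical_L br N.
Variable s : nat.
Hypothesis solvable : forall v, dser mul br s v -> v = 0.

Local Notation memN := (fun u => u \in N).

Lemma lideal_nilradical : lideal memN.
Proof. by case: nilN => [[/lidealP]]. Qed.

Lemma Wt_nilradical_eq0 : exists B, forall v, Wt memN B.+1 v -> v = 0.
Proof.
case: nilN => [[_ [sN nilX]] _]; exists (sN.+1 * 2 ^ s.-1)%N => v.
move=> Wv; apply: (Wt_eq0 lideal_nilradical nilX solvable _ Wv); exact: leqnSn.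
Qed.

Lemma Wt_nilradical v : v \in N -> Wt memN 1 v.
Proof. by move=> Nv; apply: (Mono_Wt (l := 1)); apply: Mono_lpow. Qed.

Lemma Wt1_sub_nilradical v : Wt memN 1 v -> v \in N.
Proof.
have [U HU] := spanP_vspace (fun v => exists w l, (1 <= w)%N /\ Mono memN w l v).
suff UN : (U <= N)%VS by move=> /HU Uv; apply: subvP UN _ Uv.
case: nilN => _; apply; split.
  apply/lidealP; split=> [|x /HU Ux]; first exact: lin_closed_mem.
  by apply/HU; case: (lideal_Wt lideal_nilradical 1) => _; apply.
have lpowU k u : lpow br (fun u => u \in U) k.+1 u -> Wt memN k.+1 u.
  elim: k u => [|k IH] u; first by move/HU.
  apply: lpow_ind; first exact: lin_closed_Wt.
  by move=> x /IH Hx0 /HU Hx1; apply: (Wt_br lideal_nilradical).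
have [B WB] := Wt_nilradical_eq0.
by exists B.+1 => u Hu; apply: WB; apply: lpowU Hu.
Qed.

Lemma nilradical_mul_closed v : mulP mul (@fullP _ V) memN v -> v \in N.
Proof.
apply: spanP_ind (lin_closed_mem N) _ v => _ [a [b [_ [Nb ->]]]].
apply: Wt1_sub_nilradical; apply: (Mono_Wt (w := 1) (l := 2)).
by apply: (Mono_mul (w1 := 0) (l1 := 1) (w2 := 1) (l2 := 1)); [apply: Mono_any | apply: Mono_lpow].
Qed.

Lemma ppow_nilradical_Wt k v : ppow mul br memN k.+1 v -> Wt memN k.+1 v.
Proof.
elim: k v => [|k IH] v; first exact: Wt_nilradical.
rewrite ppowSE => -[a [b [Ha [Hb ->]]]]; apply: lin_closedD; first exact: lin_closed_Wt.
  apply: spanP_ind (lin_closed_Wt _ _) _ _ Ha => _ [x [Hx ->]].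
  by apply: (Wt_br lideal_nilradical); [apply: IH (Hx i0) | apply: Wt_nilradical (Hx i1)].
apply: spanP_ind (lin_closed_Wt _ _) _ _ Hb => _ [p [q [Hp [Hq ->]]]].
by rewrite -addn1; apply: Wt_mul; [apply: IH | apply: Wt_nilradical].
Qed.

Lemma nilradical_poisson_nilpotent : poisson_nilpotent_ideal mul br N.
Proof.
have [B WB] := Wt_nilradical_eq0.
split; last by exists B.+1 => v /ppow_nilradical_Wt /WB.
split; first exact: nilradical_mul_closed.
by case: nilN => [[]].
Qed.

Lemma nilradical_is_Nil : is_Nil mul br N.
Proof.
split; first exact: nilradical_poisson_nilpotent.
by move=> I /lie_nilpotent_poisson; case: nilN => _; apply.
Qed.

End Nilradical.

End PoissonNLieTheory.

Theorem corollary5p11 (F : closedFieldType) (V : vectType F) (n : nat)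
    (mul : V -> V -> V) (br : {ffun 'I_n -> V} -> V) :
  [pchar F] =i pred0 ->
  poisson_nLie mul br ->
  poisson_solvable mul br ->
  exists N : {vspace V}, is_Nil mul br N /\ is_nilradical_L br N.
Proof.
move=> _ [n_ge2 [mulA [linear [skew [fundamental leibniz]]]]] [s solvable].
case: n br n_ge2 linear skew fundamental leibniz solvable => [|[|n']] // br _.
move=> linear skew fundamental leibniz solvable.
have [N nilN] := nilradical_L_exists linear skew fundamental.
exists N; split=> //.
exact: (nilradical_is_Nil mulA linear skew fundamental leibniz nilN solvable).
Qed.
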